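(* Let $m\ge1$ and $n\ge 2$. The number of interval-closed sets $I$ of $[m]\times[n]$ such that for every $a\in[m]$ there is some $b$ with $(a,b)\in I$ equals the Narayana number \[N(n+m,n)=\frac{1}{n}\binom{n+m}{n-1}\binom{n+m-1}{n-1},\] which is also the number of order ideals of $[m]\times[n-1]\times[2]$; indeed these interval-closed sets are in bijection with the order ideals of $[m]\times[n-1]\times[2]$.
   Context: $[k]$ is the chain $1<\cdots<k$; products of chains carry the componentwise order. A subset $I$ of a poset is interval-closed if for all $x,y\in I$ and $z$ with $x\le z\le y$ we have $z\in I$. *)

From mathcomp Require Import all_boot.
Set Implicit Arguments. Unset Strict Implicit. Unset Printing Implicit Defensive.

(* [k] is modelled by 'I_k = {0,...,k-1} with its natural order (a shift of 1..k). *)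

Definition le2 (m n : nat) (x y : 'I_m * 'I_n) : bool :=
  (x.1 <= y.1) && (x.2 <= y.2).

Definition le3 (m k l : nat) (x y : 'I_m * 'I_k * 'I_l) : bool :=
  [&& x.1.1 <= y.1.1, x.1.2 <= y.1.2 & x.2 <= y.2].

Definition interval_closed (m n : nat) (I : {set 'I_m * 'I_n}) : bool :=
  [forall x, forall y, forall z,
     [&& x \in I, y \in I, le2 x z & le2 z y] ==> (z \in I)].

Definition full_rows (m n : nat) (I : {set 'I_m * 'I_n}) : bool :=
  [forall a : 'I_m, exists b : 'I_n, (a, b) \in I].

Definition order_ideal3 (m k l : nat) (J : {set 'I_m * 'I_k * 'I_l}) : bool :=
  [forall x, forall y, (le3 x y && (y \in J)) ==> (x \in J)].

From mathcomp Require Import all_boot.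
From mathcomp Require Import zify.
Set Implicit Arguments. Unset Strict Implicit. Unset Printing Implicit Defensive.

(* Write n = q + 1.  Both families of the theorem are in bijection with
   "staircases": families of intervals [u_a, v_a] in [0, q], indexed by
   a in [m], whose two endpoints are both non-increasing in a.
   - An interval-closed set of [m] x [q+1] meeting every row has row a equal
     to an interval [u_a, v_a], and interval-closedness makes both endpoints
     non-increasing.
   - An order ideal of [m] x [q] x [2] is determined by the heights
     v_a >= u_a of its columns in layers 0 and 1, non-increasing in a.
   Staircases, listed from row 0, are the chains enumerated by the recursive
   list [chains m q q].  Its length obeys a first-step recursion, from which
   an induction proves the Lindstrom-Gessel-Viennot closed form
   C(k+x,k) C(k+y,k) - C(k+x,k+1) C(k+y,y+1); at x = y = q this is the
   Narayana number. *)

Fixpoint chain (x y : nat) (s : seq (nat * nat)) : bool :=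
  if s is p :: s' then [&& p.1 <= p.2, p.1 <= x, p.2 <= y & chain p.1 p.2 s']
  else true.

Definition heads (x y : nat) : seq (nat * nat) :=
  [seq (u, v) | v <- iota 0 y.+1, u <- iota 0 (minn x v).+1].

Fixpoint chains (k x y : nat) : seq (seq (nat * nat)) :=
  if k is k'.+1 then [seq p :: s | p <- heads x y, s <- chains k' p.1 p.2]
  else [:: [::]].

Lemma chainsS k x y :
  chains k.+1 x y = [seq p :: s | p <- heads x y, s <- chains k p.1 p.2].
Proof. by []. Qed.

Lemma mem_heads x y p : (p \in heads x y) = [&& p.1 <= p.2, p.1 <= x & p.2 <= y].
Proof.
case: p => u v; apply/allpairsPdep/idP => [[v' [u' []]]|/and3P[uv ux vy]].
  rewrite !mem_iota /= !add0n !ltnS leq_min => vy /andP[ux uv] [-> ->].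
  by rewrite /= uv ux vy.
by exists v, u; rewrite !mem_iota /= !add0n !ltnS leq_min uv ux vy.
Qed.

Lemma mem_chains k x y s : (s \in chains k x y) = (size s == k) && chain x y s.
Proof.
elim: k x y s => [|k IHk] x y s; first by rewrite inE; case: s.
rewrite chainsS; apply/allpairsPdep/idP => [[p [t [+ + ->]]]|].
  by rewrite mem_heads IHk /= eqSS => /and3P[-> -> ->] /andP[-> ->].
case: s => [|p t] //=; rewrite eqSS => /andP[sz /and4P[uv ux vy cht]].
by exists p, t; rewrite mem_heads IHk sz uv ux vy.
Qed.

Lemma uniq_heads x y : uniq (heads x y).
Proof.
apply: (@allpairs_uniq_dep _ (fun=> nat)) => [|v _|]; rewrite ?iota_uniq //.
by move=> [v u] [v' u'] _ _ /= [-> ->].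
Qed.

Lemma uniq_chains k x y : uniq (chains k x y).
Proof.
elim: k x y => [|k IHk] x y //; rewrite chainsS.
apply: (@allpairs_uniq_dep _ (fun=> seq (nat * nat))) => [|p _|].
- exact: uniq_heads.
- exact: IHk.
- by move=> [p s] [p' s'] _ _ /= [-> ->].
Qed.

Definition nchains (k x y : nat) : nat := size (chains k x y).

Lemma nchainsS k x y :
  nchains k.+1 x y = \sum_(0 <= v < y.+1) \sum_(0 <= u < (minn x v).+1) nchains k u v.
Proof.
by rewrite /nchains chainsS size_allpairs_dep sumnE big_map big_allpairs_dep.
Qed.

(* Since u <= v <= y, the bound x only matters through min x y. *)
Lemma nchains_minl k x y : nchains k x y = nchains k (minn x y) y.
Proof.
case: k => [|k] //; rewrite !nchainsS.
apply: eq_big_nat => v /andP[_ vy]; congr (\sum_(0 <= u < _.+1) _); lia.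
Qed.

Lemma nchainsSr k x y :
  nchains k.+1 x y.+1
    = nchains k.+1 x y + \sum_(0 <= u < (minn x y.+1).+1) nchains k u y.+1.
Proof. by rewrite !nchainsS big_nat_recr. Qed.

Lemma bin_addC a b : 'C(a + b, a) = 'C(a + b, b).
Proof. by rewrite -(bin_sub (leq_addr b a)) addKn. Qed.

(* The binomials of the closed form: [npaths k x] counts lattice paths
   (non-increasing length-k sequences in [0, x]); [nswap_hi k x * nswap_lo k y]
   is the correction term of the Lindstrom-Gessel-Viennot determinant. *)
Definition npaths (k x : nat) : nat := 'C(k + x, k).
Definition nswap_hi (k x : nat) : nat := 'C(k + x, k.+1).
Definition nswap_lo (k y : nat) : nat := 'C(k + y, y.+1).

Lemma npathsSS k x : npaths k.+1 x.+1 = npaths k.+1 x + npaths k x.+1.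
Proof. by rewrite /npaths addnS binS addSnnS. Qed.

Lemma nswap_hiSS k x : nswap_hi k.+1 x.+1 = nswap_hi k.+1 x + nswap_hi k x.+1.
Proof. by rewrite /nswap_hi addnS binS addSnnS. Qed.

Lemma nswap_loSS k y : nswap_lo k.+1 y.+1 = nswap_lo k.+1 y + nswap_lo k y.+1.
Proof. by rewrite /nswap_lo addnS binS addnC addSnnS addnC. Qed.

Lemma nswap_hi_npaths k x : nswap_hi k x.+1 = npaths k.+1 x.
Proof. by rewrite /nswap_hi /npaths addnS addSn. Qed.

Lemma nswap_lo_npaths k y : nswap_lo k.+1 y = npaths k y.+1.
Proof. by rewrite /nswap_lo /npaths addSnnS bin_addC. Qed.

Lemma npaths0 k : npaths k 0 = 1.
Proof. by rewrite /npaths addn0 binn. Qed.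

Lemma nswap_hi0 k : nswap_hi k 0 = 0.
Proof. by rewrite /nswap_hi addn0 bin_small. Qed.

Lemma hockey_stick (F : nat -> nat -> nat) k x :
  (forall x, F k.+1 x.+1 = F k.+1 x + F k x.+1) -> F k.+1 0 = F k 0 ->
  \sum_(0 <= u < x.+1) F k u = F k.+1 x.
Proof.
move=> pascal F0; elim: x => [|x IHx]; first by rewrite big_nat1 F0.
by rewrite big_nat_recr //= IHx pascal.
Qed.

Definition lgv_identity k : Prop := forall x y, x <= y ->
  nchains k x y + nswap_hi k x * nswap_lo k y = npaths k x * npaths k y.

(* Summing the closed form at length k over a column gives the column
   contribution to the closed form at length k + 1. *)
Lemma column_closed k : lgv_identity k -> forall x v, x <= v ->
  \sum_(0 <= u < x.+1) nchains k u v + nswap_hi k.+1 x * nswap_lo k v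
    = npaths k.+1 x * npaths k v.
Proof.
move=> IHk x v xv.
rewrite -(hockey_stick x (npathsSS k)) ?npaths0 //.
rewrite -(hockey_stick x (nswap_hiSS k)) ?nswap_hi0 //.
rewrite !big_distrl -big_split; apply: eq_big_nat => u /andP[_ ux] /=.
by apply: IHk; lia.
Qed.

Lemma nchains_closed k : lgv_identity k.
Proof.
elim: k => [|k IHk] x y.
  by rewrite /nswap_lo bin_small ?muln0 // /npaths !bin0.
have col := column_closed IHk.
elim: y x => [|y IHy] x.
  rewrite leqn0 => /eqP ->; have := col 0 0 (leqnn 0).
  by rewrite nchainsS !big_nat1 !nswap_hi0 !npaths0.
rewrite leq_eqVlt ltnS => /predU1P[->|xy].
  have := col y.+1 y.+1 (leqnn _); have := IHy y (leqnn y).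
  rewrite nchainsSr minnn [nchains k.+1 y.+1 y]nchains_minl (minn_idPr (leqnSn y)).
  rewrite npathsSS nswap_hiSS nswap_loSS nswap_hi_npaths nswap_lo_npaths; lia.
have := col x y.+1 (leqW xy); have := IHy x xy.
rewrite nchainsSr (minn_idPl (leqW xy)) npathsSS nswap_loSS; lia.
Qed.

Lemma narayana_nchains m q :
  q.+1 * nchains m q q = 'C(q.+1 + m, q) * 'C(q + m, q).
Proof.
have closed := nchains_closed m (leqnn q).
rewrite /npaths /nswap_hi /nswap_lo in closed.
have symA : 'C(q + m, q) = 'C(m + q, m).
  by rewrite bin_addC addnC.
have symD : 'C(q.+1 + m, q) = 'C(m + q.+1, m.+1).
  by rewrite addSnnS bin_addC addnC addSnnS.
have hiA : m.+1 * 'C(m + q, m.+1) = q * 'C(m + q, m).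
  by rewrite mul_bin_left; congr (_ * _); lia.
have loA : q.+1 * 'C(m + q, q.+1) = m * 'C(m + q, m).
  by rewrite mul_bin_left -symA addnC; congr (_ * _); lia.
have DA : m.+1 * 'C(m + q.+1, m.+1) = (m + q).+1 * 'C(m + q, m).
  by rewrite -mul_bin_diag addnS.
rewrite symA symD; apply/eqP; rewrite -(@eqn_pmul2l m.+1) //; apply/eqP.
set W := nchains m q q in closed *.
set A := 'C(m + q, m) in closed hiA loA DA *.
set B := 'C(m + q, m.+1) in closed hiA *.
set C := 'C(m + q, q.+1) in closed loA *.
have prod : (m.+1 * B) * (q.+1 * C) = (q * A) * (m * A) by rewrite hiA loA.
nia.
Qed.

Notation nthp s i := (nth (0, 0) s i).

Lemma chain_nthP x y s :
  chain x y s <->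
  [/\ forall i, i < size s -> (nthp s i).1 <= (nthp s i).2,
      forall i j, i <= j < size s ->
        (nthp s j).1 <= (nthp s i).1 /\ (nthp s j).2 <= (nthp s i).2
    & forall i, i < size s -> (nthp s i).1 <= x /\ (nthp s i).2 <= y].
Proof.
elim: s x y => [|p s IHs] x y /=.
  by split=> // _; split=> [i|i j|i]; rewrite ?ltn0 ?andbF.
split=> [/and4P[uv ux vy /IHs[K1 K2 K3]]|[K1 K2 K3]].
  split.
  - by case=> [|i] //= /K1.
  - case=> [|i] [|j] /andP[ij jn] //=; first by have [] := K3 j jn.
    by apply: K2; rewrite !ltnS in ij jn; rewrite ij jn.
  - case=> [|i] /=; first by rewrite ux vy.
    move=> /K3[h1 h2].
    by split; [apply: leq_trans h1 ux | apply: leq_trans h2 vy].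
have [ux vy] := K3 0 isT; rewrite (K1 0 isT) ux vy /=; apply/IHs; split.
- by move=> i /(K1 i.+1).
- by move=> i j ij; apply: (K2 i.+1 j.+1).
- by move=> i /= ilt; apply: (K2 0 i.+1).
Qed.

Definition staircase m q (f : {ffun 'I_m -> nat * nat}) : Prop :=
  (forall i, (f i).1 <= (f i).2 <= q) /\
  (forall i j : 'I_m, i <= j -> (f j).1 <= (f i).1 /\ (f j).2 <= (f i).2).

Definition stairs_of m (s : seq (nat * nat)) : {ffun 'I_m -> nat * nat} :=
  [ffun i : 'I_m => nthp s i].

Lemma mem_chains_staircase m q (s : seq (nat * nat)) :
  s \in chains m q q <-> size s = m /\ staircase q (stairs_of m s).
Proof.
rewrite mem_chains; split=> [/andP[/eqP sz /chain_nthP[K1 K2 K3]]|[sz [S1 S2]]].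
  split=> //; split=> [i|i j ij]; rewrite !ffunE.
    by have := K1 i; have := K3 i; rewrite sz ltn_ord => /(_ isT)[] _ + /(_ isT); lia.
  by apply: K2; rewrite ij sz /=.
rewrite sz eqxx; apply/chain_nthP; rewrite sz; split.
- by move=> i im; have := S1 (Ordinal im); rewrite ffunE => /andP[].
- move=> i j /andP[ij jm]; have im : i < m by lia.
  by have := S2 (Ordinal im) (Ordinal jm) ij; rewrite !ffunE.
- by move=> i im; have := S1 (Ordinal im); rewrite ffunE /=; lia.
Qed.

Lemma stairs_of_fgraph m (f : {ffun 'I_m -> nat * nat}) : stairs_of m (fgraph f) = f.
Proof. by apply/ffunP => i; rewrite ffunE nth_fgraph_ord. Qed.

Lemma card_staircase_code (T : finType) (A : {set T}) m q
    (code : {ffun 'I_m -> nat * nat} -> T) :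
    (forall f, staircase q f -> code f \in A) ->
    (forall f g, staircase q f -> staircase q g -> code f = code g -> f = g) ->
    (forall X, X \in A -> exists2 f, staircase q f & code f = X) ->
  #|A| = nchains m q q.
Proof.
move=> codeA code_inj codeP.
pose G := chains m q q; pose F s := code (stairs_of m s).
have F_inj : {in G &, injective F}.
  move=> s t /mem_chains_staircase[ss Ss] /mem_chains_staircase[st St] /code_inj Est.
  apply: (@eq_from_nth _ (0, 0)) => [|i]; first by rewrite ss st.
  rewrite ss => im.
  have := congr1 (fun f : {ffun _ -> _} => f (Ordinal im)) (Est Ss St).
  by rewrite !ffunE.
have -> : #|A| = #|[seq F s | s <- G]|.
  apply: eq_card => X; apply/idP/mapP => [/codeP[f Sf <-]|[s sG ->]].
    exists (val (fgraph f)); rewrite /F ?stairs_of_fgraph //.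
    apply/mem_chains_staircase; rewrite stairs_of_fgraph; split=> //.
    by rewrite size_tuple card_ord.
  by apply: codeA; case/mem_chains_staircase: sG.
rewrite /nchains -(size_map F); apply/card_uniqP.
by rewrite (map_inj_in_uniq F_inj) uniq_chains.
Qed.

Lemma interval_eq q u v u' v' :
    u <= v <= q -> u' <= v' <= q ->
    (forall b : 'I_q.+1, (u <= b <= v) = (u' <= b <= v')) ->
  u = u' /\ v = v'.
Proof.
move=> /andP[uv vq] /andP[uv' vq'] E.
have E' b : b <= q -> (u <= b <= v) = (u' <= b <= v').
  by move=> bq; exact: (E (Ordinal (bq : b < q.+1))).
have : u' <= u <= v' by rewrite -E' ?leqnn ?uv //; lia.
have : u' <= v <= v' by rewrite -E' ?leqnn ?uv.
have : u <= u' <= v by rewrite E' ?leqnn ?uv' //; lia.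
have : u <= v' <= v by rewrite E' ?leqnn ?uv'.
lia.
Qed.

Section IntervalClosedSets.
Variables m q : nat.
Implicit Types (I : {set 'I_m * 'I_q.+1}) (f : {ffun 'I_m -> nat * nat}).

Lemma interval_closedP I :
  reflect (forall x y z, x \in I -> y \in I -> le2 x z -> le2 z y -> z \in I)
          (interval_closed I).
Proof.
apply: (iffP forallP) => [IC x y z Ix Iy xz zy | IC x].
  move/forallP: (IC x) => /(_ y) /forallP /(_ z) /implyP.
  by apply; rewrite Ix Iy xz zy.
by apply/forallP => y; apply/forallP => z; apply/implyP => /and4P[]; exact: IC.
Qed.

Definition interval_set f : {set 'I_m * 'I_q.+1} :=
  [set p : 'I_m * 'I_q.+1 | (f p.1).1 <= p.2 <= (f p.1).2].

Lemma interval_set_full f : staircase q f ->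
  interval_closed (interval_set f) && full_rows (interval_set f).
Proof.
move=> [S1 S2]; apply/andP; split.
  apply/interval_closedP => -[a1 b1] [a2 b2] [c d].
  rewrite !inE /le2 /= => /andP[x1 x2] /andP[y1 y2] /andP[ac bd] /andP[ca db].
  by have [+ _] := S2 _ _ ac; have [_ +] := S2 _ _ ca; lia.
apply/forallP => a; apply/existsP; have /andP[uv vq] := S1 a.
have uq : (f a).1 < q.+1 by apply: leq_trans uv _.
by exists (Ordinal uq); rewrite inE leqnn uv.
Qed.

Lemma interval_set_inj f g : staircase q f -> staircase q g ->
  interval_set f = interval_set g -> f = g.
Proof.
move=> [Sf _] [Sg _] E; apply/ffunP => a.
have [] := interval_eq (Sf a) (Sg a).
  by move=> b; have := congr1 (fun X : {set _} => (a, b) \in X) E; rewrite !inE.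
by case: (f a) => ? ?; case: (g a) => ? ? /= -> ->.
Qed.

Definition row_is I (a : 'I_m) (u v : 'I_q.+1) : Prop :=
  forall b, ((a, b) \in I) = (u <= b <= v).

Lemma row_interval I a b0 : interval_closed I -> (a, b0) \in I ->
  exists u v : 'I_q.+1, u <= v /\ row_is I a u v.
Proof.
move=> /interval_closedP IC Ib0.
case: (@arg_minnP _ b0 (fun b => (a, b) \in I) val Ib0) => u Iu minu.
case: (@arg_maxnP _ b0 (fun b => (a, b) \in I) val Ib0) => v Iv maxv.
exists u, v; split=> [|b]; first exact: minu.
apply/idP/idP => [Ib|/andP[ub bv]]; first by rewrite (minu _ Ib); exact: maxv.
by apply: (IC _ _ _ Iu Iv); rewrite /le2 /= leqnn ?ub ?bv.
Qed.

(* In an interval-closed set, the row intervals have non-increasing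
   endpoints: if u <= v' the box between (i, u) and (j, v') lies in I,
   otherwise v' < u already settles both inequalities. *)
Lemma rows_decrease I (i j : 'I_m) (u v u' v' : 'I_q.+1) :
    interval_closed I -> i <= j -> u <= v -> u' <= v' ->
    row_is I i u v -> row_is I j u' v' ->
  u' <= u /\ v' <= v.
Proof.
move=> /interval_closedP IC ij uv uv' Ri Rj.
case: (leqP u v') => [uv''|]; last by lia.
have Iiu : (i, u) \in I by rewrite Ri leqnn uv.
have Ijv : (j, v') \in I by rewrite Rj leqnn uv'.
have : (i, v') \in I by apply: IC Iiu Ijv _ _; rewrite /le2 /= ?leqnn ?uv'' ?ij.
have : (j, u) \in I by apply: IC Iiu Ijv _ _; rewrite /le2 /= ?leqnn ?uv'' ?ij.
by rewrite Ri Rj; lia.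
Qed.

Lemma interval_set_onto I : interval_closed I -> full_rows I ->
  exists2 f, staircase q f & interval_set f = I.
Proof.
move=> IC /forallP full.
have rows a : exists p : 'I_q.+1 * 'I_q.+1, p.1 <= p.2 /\ row_is I a p.1 p.2.
  have /existsP[b0 Ib0] := full a.
  by have [u [v uvR]] := row_interval IC Ib0; exists (u, v).
have [r Hr] := fin_all_exists rows.
exists [ffun a => ((r a).1 : nat, (r a).2 : nat)].
  split=> [a|i j ij]; rewrite !ffunE /=.
    by have [-> _] := Hr a; rewrite /= -ltnS ltn_ord.
  have [uv Ri] := Hr i; have [uv' Rj] := Hr j.
  exact: rows_decrease IC ij uv uv' Ri Rj.
apply/setP => -[a b]; rewrite inE ffunE /=.
by have [_ ->] := Hr a.
Qed.

Lemma card_interval_closed_full :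
  #|[set I : {set 'I_m * 'I_q.+1} | interval_closed I && full_rows I]| = nchains m q q.
Proof.
apply: (card_staircase_code (code := interval_set)) => [f Sf | | I].
- by rewrite inE interval_set_full.
- exact: interval_set_inj.
- by rewrite inE => /andP[IC full]; exact: interval_set_onto.
Qed.

End IntervalClosedSets.

Lemma prefix_eq k w w' :
  w <= k -> w' <= k -> (forall b : 'I_k, (b < w) = (b < w')) -> w = w'.
Proof.
move=> wk wk' E; apply/eqP; rewrite eqn_leq; apply/andP; split; rewrite leqNgt;
  apply/negP => lt.
- by have := E (Ordinal (leq_trans lt wk)); rewrite /= lt ltnn.
- by have := E (Ordinal (leq_trans lt wk')); rewrite /= lt ltnn.
Qed.

Section OrderIdeals.
Variables m k : nat.
Implicit Types (J : {set 'I_m * 'I_k * 'I_2}) (f : {ffun 'I_m -> nat * nat}).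

Lemma order_ideal3P J :
  reflect (forall x y, le3 x y -> y \in J -> x \in J) (order_ideal3 J).
Proof.
apply: (iffP forallP) => [DJ x y xy Jy | DJ x].
  by move/forallP: (DJ x) => /(_ y) /implyP; apply; rewrite xy Jy.
by apply/forallP => y; apply/implyP => /andP[]; exact: DJ.
Qed.

Definition height f (a : 'I_m) (c : 'I_2) : nat :=
  if val c == 0 then (f a).2 else (f a).1.

Definition ideal_of f : {set 'I_m * 'I_k * 'I_2} :=
  [set p : 'I_m * 'I_k * 'I_2 | p.1.2 < height f p.1.1 p.2].

Lemma height_le f a c : staircase k f -> height f a c <= k.
Proof. by case=> /(_ a) S1 _; rewrite /height; case: ifP => _; lia. Qed.

Lemma height_mono f (a a' : 'I_m) (c c' : 'I_2) : staircase k f ->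
  a <= a' -> c <= c' -> height f a' c' <= height f a c.
Proof.
case=> /(_ a) S1 S2 aa cc; have [uu vv] := S2 _ _ aa.
by rewrite /height; case: c c' cc => -[|[|c]] // ? [[|[|c']] ?] //= _; lia.
Qed.

Lemma ideal_of_ideal f : staircase k f -> order_ideal3 (ideal_of f).
Proof.
move=> Sf; apply/order_ideal3P => -[[a b] c] [[a' b'] c'].
rewrite /le3 !inE /= => /and3P[aa bb cc] lt.
by have := height_mono Sf aa cc; lia.
Qed.

Lemma ideal_of_inj f g : staircase k f -> staircase k g ->
  ideal_of f = ideal_of g -> f = g.
Proof.
move=> Sf Sg E; apply/ffunP => a.
have H c : height f a c = height g a c.
  apply: prefix_eq (height_le a c Sf) (height_le a c Sg) _ => b.
  by have := congr1 (fun X : {set _} => (a, b, c) \in X) E; rewrite !inE.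
have := H ord0; have := H ord_max; rewrite /height /=.
by case: (f a) => ? ?; case: (g a) => ? ? /= -> ->.
Qed.

Definition col_height J (a : 'I_m) (c : 'I_2) : nat :=
  \max_(b : 'I_k | (a, b, c) \in J) b.+1.

Lemma col_height_le J a c : col_height J a c <= k.
Proof. by apply/bigmax_leqP => b _; exact: ltn_ord. Qed.

Lemma col_height_mono J (a a' : 'I_m) (c c' : 'I_2) : order_ideal3 J ->
  a <= a' -> c <= c' -> col_height J a' c' <= col_height J a c.
Proof.
move=> /order_ideal3P DJ aa cc; apply/bigmax_leqP => b Jb.
by apply: leq_bigmax_cond; apply: DJ Jb; rewrite /le3 /= aa leqnn cc.
Qed.

Lemma col_heightP J a c (b : 'I_k) : order_ideal3 J ->
  ((a, b, c) \in J) = (b < col_height J a c).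
Proof.
move=> /order_ideal3P DJ; apply/idP/idP => [Jb|]; first exact: leq_bigmax_cond.
apply: contraTT => notJb; rewrite -leqNgt; apply/bigmax_leqP => b' Jb'.
rewrite ltnNge; apply: contra notJb => bb.
by apply: DJ Jb'; rewrite /le3 /= leqnn bb leqnn.
Qed.

Lemma ideal_of_onto J : order_ideal3 J -> exists2 f, staircase k f & ideal_of f = J.
Proof.
move=> DJ; pose f := [ffun a => (col_height J a ord_max, col_height J a ord0)].
have hf a c : height f a c = col_height J a c.
  rewrite /height !ffunE; case: c => -[|[|c]] //= ?; congr col_height; exact: val_inj.
exists f.
  split=> [a|i j ij]; rewrite !ffunE /=.
    by rewrite col_height_mono ?col_height_le.
  by rewrite !col_height_mono.
apply/setP => -[[a b] c]; rewrite inE /= hf.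
by rewrite col_heightP.
Qed.

Lemma card_order_ideals :
  #|[set J : {set 'I_m * 'I_k * 'I_2} | order_ideal3 J]| = nchains m k k.
Proof.
apply: (card_staircase_code (code := ideal_of)) => [f Sf | | J].
- by rewrite inE ideal_of_ideal.
- exact: ideal_of_inj.
- by rewrite inE; exact: ideal_of_onto.
Qed.

End OrderIdeals.

Theorem theorem4p4 (m n : nat) (hm : 1 <= m) (hn : 2 <= n) :
  n * #|[set I : {set 'I_m * 'I_n} | interval_closed I && full_rows I]|
    = 'C(n + m, n - 1) * 'C(n + m - 1, n - 1)
  /\ #|[set I : {set 'I_m * 'I_n} | interval_closed I && full_rows I]|
    = #|[set J : {set 'I_m * 'I_(n - 1) * 'I_2} | order_ideal3 J]|.
Proof.
case: n hn => [|q] // _.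
rewrite card_interval_closed_full card_order_ideals !subn1 addSn /=.
by split=> //; exact: narayana_nchains.
Qed.
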